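(* For every problem size $(n,m)$, the sets $\chi\mathrm{MF}$ and $\chi\mathrm{SP}\cup\chi\mathrm{MF}$ are closed subsets of $\mathrm{JSP}(n,m)$, and $\chi\mathrm{MF}\subset\overline{\chi\mathrm{SP}}$; consequently $\overline{\chi\mathrm{SP}}=\chi\mathrm{SP}\cup\chi\mathrm{MF}$.
   Context: Jet space: $\mathrm{JSP}(n,m)=\mathbb R^{nm_\le+m_\le+nm_=+m_=+n}$ with elements $\sigma=((a_i,\alpha_i)_{i=1..m_\le},(b_j,\beta_j)_{j=1..m_=},a_{m_\le^*})$, $a_i,b_j,a_{m_\le^*}\in\mathbb R^n$, $\alpha_i,\beta_j\in\mathbb R$, $m_\le^*:=m_\le+1$. Let $I_0(\sigma)=\{i\le m_\le:\alpha_i=0\}$, $I_0^*=I_0\cup\{m_\le^*\}$, and $C(\sigma)$ the set of $(\mu,\lambda)\in[0,\infty)^{m_\le^*}\times\mathbb R^{m_=}$ such that $\alpha_i\le0$ for all $i$, $\mu_i=0$ for $i\notin I_0^*$, and $\sum_i\mu_ia_i+\sum_j\lambda_jb_j=0$ (so $C(\sigma)=\emptyset$ if some $\alpha_i>0$). $\mathcal I(\sigma)$ is the set of pairs $(I,J)$, $I\subset I_0^*$, $J\subset\{1..m_=\}$, with $I\dot\cup J\ne\emptyset$, admitting $(\mu,\lambda)\in C(\sigma)$ with $\mu_i>0$ ($i\in I$), $\lambda_j\ne0$ ($j\in J$), and inclusion-minimal (for $I\dot\cup J$) among such pairs. $\mathcal I^{SP}(\sigma)=\{(I,J)\in\mathcal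 I(\sigma): m_\le^*\in I\}$, $\mathcal I^{MF}=\mathcal I\setminus\mathcal I^{SP}$. $\chi\mathrm{SP}=\{\sigma:\mathcal I^{SP}(\sigma)\ne\emptyset\}$, $\chi\mathrm{MF}=\{\sigma:\mathcal I^{MF}(\sigma)\ne\emptyset\}$. *)

From Stdlib Require Import Reals.
From mathcomp Require Import all_boot.
Set Implicit Arguments. Unset Strict Implicit. Unset Printing Implicit Defensive.

Local Open Scope R_scope.

(* An element sigma of JSP(n,m), m = (mle, meq):
   ((a_i, alpha_i)_{i < mle}, (b_j, beta_j)_{j < meq}, a_{mle^*}). *)
Record jet (n mle meq : nat) := Jet {
  ja : 'I_mle -> 'I_n -> R;
  jalpha : 'I_mle -> R;
  jb : 'I_meq -> 'I_n -> R;
  jbeta : 'I_meq -> R;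
  jastar : 'I_n -> R }.

Section Defs.
Variables n mle meq : nat.
Implicit Types (sigma tau : jet n mle meq).

(* Standard (sup-norm) topology on JSP(n,m) = R^(n mle + mle + n meq + meq + n). *)
Definition jet_close sigma tau (eps : R) : Prop :=
  (forall i k, Rabs (ja sigma i k - ja tau i k) < eps) /\
  (forall i, Rabs (jalpha sigma i - jalpha tau i) < eps) /\
  (forall j k, Rabs (jb sigma j k - jb tau j k) < eps) /\
  (forall j, Rabs (jbeta sigma j - jbeta tau j) < eps) /\
  (forall k, Rabs (jastar sigma k - jastar tau k) < eps).

Definition jclosure (S : jet n mle meq -> Prop) (sigma : jet n mle meq) : Prop :=
  forall eps, 0 < eps -> exists tau, S tau /\ jet_close sigma tau eps.

Definition jclosed (S : jet n mle meq -> Prop) : Prop :=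
  forall sigma, jclosure S sigma -> S sigma.

(* indices 1..mle^* are 'I_mle.+1, with mle^* = ord_max *)
Definition aext sigma (i : 'I_mle.+1) : 'I_n -> R :=
  match unlift ord_max i with Some j => ja sigma j | None => jastar sigma end.

Definition in_I0star sigma (i : 'I_mle.+1) : Prop :=
  match unlift ord_max i with Some j => jalpha sigma j = 0 | None => True end.

Definition inC sigma (mu : 'I_mle.+1 -> R) (lam : 'I_meq -> R) : Prop :=
  (forall i, jalpha sigma i <= 0) /\
  (forall i, 0 <= mu i) /\
  (forall i, ~ in_I0star sigma i -> mu i = 0) /\
  (forall k : 'I_n,
     \big[Rplus/0]_(i < mle.+1) (mu i * aext sigma i k)
     + \big[Rplus/0]_(j < meq) (lam j * jb sigma j k) = 0).

Definition admits sigma (I : {set 'I_mle.+1}) (J : {set 'I_meq}) : Prop :=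
  (forall i, i \in I -> in_I0star sigma i) /\
  (I != set0 \/ J != set0) /\
  exists mu lam, inC sigma mu lam /\
    (forall i, (i \in I -> 0 < mu i) /\ (i \notin I -> mu i = 0)) /\
    (forall j, (j \in J -> lam j <> 0) /\ (j \notin J -> lam j = 0)).

Definition inIcal sigma I J : Prop :=
  admits sigma I J /\
  forall (I' : {set 'I_mle.+1}) (J' : {set 'I_meq}), I' \subset I -> J' \subset J -> admits sigma I' J' ->
    I' = I /\ J' = J.

Definition chiSP sigma : Prop :=
  exists I J, inIcal sigma I J /\ ord_max \in I.

Definition chiMF sigma : Prop :=
  exists I J, inIcal sigma I J /\ ord_max \notin I.

End Defs.

(* Everything is phrased through multipliers (mu, lam) in C(sigma).  A pair
   (I, J) is admissible exactly when it is the support of a nonzero multiplier,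
   and every admissible pair contains an inclusion-minimal one; hence
     chiSP \/ chiMF = jets admitting a nonzero multiplier,
     chiMF          = jets admitting a nonzero multiplier with mu_* = 0,
   while a multiplier with mu_* > 0 already gives chiSP, by a Caratheodory-type
   reduction removing the sub-supports that avoid a_*.
   Closedness: multipliers of approximating jets are rescaled to sup-norm one;
   a Bolzano-Weierstrass argument yields a cluster point, and every condition
   defining C(sigma) survives the limit.
   Density: for (mu, lam) in C(sigma) with mu_* = 0, moving a_i by -c a_* and
   b_j by -c lam_j a_* lets the mass sum mu + sum lam^2 be put on a_*, giving a
   multiplier with mu_* > 0 on a jet arbitrarily close to sigma. *)

From Stdlib Require Import Reals Lra Classical.
From mathcomp Require Import all_boot all_order.
From mathcomp Require Import Rstruct.
Import Order.TTheory.
Set Implicit Arguments. Unset Strict Implicit. Unset Printing Implicit Defensive.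
Local Open Scope R_scope.

Lemma small_eq0 (x : R) : (forall d, 0 < d -> Rabs x <= d) -> x = 0.
Proof.
move=> small; apply: NNPP => /Rabs_pos_lt pos.
have := small (Rabs x / 2); lra.
Qed.

Lemma sumR_ge0 (I : finType) (P : pred I) (F : I -> R) :
  (forall i, 0 <= F i) -> 0 <= \big[Rplus/0]_(i | P i) F i.
Proof. by move=> F0; apply: big_ind => [|x y|i _]; [lra | lra | exact: F0]. Qed.

Lemma sumR_term (I : finType) (F : I -> R) (j : I) :
  (forall i, 0 <= F i) -> F j <= \big[Rplus/0]_(i : I) F i.
Proof. by move=> F0; rewrite (bigD1 j) //=; have := sumR_ge0 (fun i => i != j) F0; lra. Qed.

Lemma fin_bound (I : finType) (F : I -> R) : exists2 A, 0 <= A & forall i, Rabs (F i) <= A.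
Proof.
exists (\big[Rplus/0]_(i : I) Rabs (F i)); first by apply: sumR_ge0 => i; apply: Rabs_pos.
by move=> i; apply: (sumR_term (F := fun i => Rabs (F i))) => k; apply: Rabs_pos.
Qed.

Lemma sum_small (I : finType) (g : R) : 0 < g ->
  exists2 e, 0 < e & forall F : I -> R,
    (forall i, Rabs (F i) <= e) -> Rabs (\big[Rplus/0]_(i : I) F i) <= g.
Proof.
move=> g0; have N0 := pos_INR #|I|.
exists (g / (INR #|I| + 1)); first by apply: Rdiv_lt_0_compat; lra.
set e := g / _ => F small.
have sum_const : \big[Rplus/0]_(i : I) e = INR #|I| * e.
  rewrite big_const; elim: #|I| => [|m IH]; first by rewrite /=; lra.
  by rewrite S_INR /= IH; ring.
have : Rabs (\big[Rplus/0]_(i : I) F i) <= \big[Rplus/0]_(i : I) e.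
  elim/big_rec2: _ => [|i y1 y2 _ IH]; first by rewrite Rabs_R0; lra.
  by have := Rabs_triang (F i) y2; have := small i; lra.
have : INR #|I| * e + e = g by rewrite /e; field; lra.
have : 0 < e by rewrite /e; apply: Rdiv_lt_0_compat; lra.
rewrite sum_const; lra.
Qed.

Lemma bilinear_close (I : finType) (g : R) (a : I -> R) : 0 < g ->
  exists2 e, 0 < e & forall x y b : I -> R,
    (forall i, Rabs (x i - y i) <= e) -> (forall i, Rabs (y i) <= 1) ->
    (forall i, Rabs (a i - b i) <= e) ->
    Rabs (\big[Rplus/0]_(i : I) (x i * a i) - \big[Rplus/0]_(i : I) (y i * b i)) <= g.
Proof.
move=> g0; have [A A0 HA] := fin_bound a; have [e1 e1_0 small] := sum_small I g0.
exists (e1 / (A + 1)); first by apply: Rdiv_lt_0_compat; lra.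
set e := e1 / _ => x y b dxy y1 dab.
have -> : \big[Rplus/0]_(i : I) (x i * a i) - \big[Rplus/0]_(i : I) (y i * b i) =
          \big[Rplus/0]_(i : I) (x i * a i - y i * b i).
  have -> : \big[Rplus/0]_(i : I) (x i * a i) =
            \big[Rplus/0]_(i : I) ((x i * a i - y i * b i) + y i * b i).
    by apply: eq_bigr => i _; ring.
  by rewrite big_split /=; ring.
apply: small => i.
have -> : x i * a i - y i * b i = (x i - y i) * a i + y i * (a i - b i) by ring.
apply: Rle_trans (Rabs_triang _ _) _; rewrite !Rabs_mult.
have := Rmult_le_compat _ _ _ _ (Rabs_pos _) (Rabs_pos _) (dxy i) (HA i).
have := Rmult_le_compat _ _ _ _ (Rabs_pos _) (Rabs_pos _) (y1 i) (dab i).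
have : e * A + 1 * e = e1 by rewrite /e; field; lra.
lra.
Qed.

(* The point
   [c] is the supremum of the reals lying below a point of every [P e]. *)
Lemma cluster1 (P : R -> R -> Prop) :
  (forall e e' x, 0 < e -> e <= e' -> P e x -> P e' x) ->
  (forall e, 0 < e -> exists2 x, Rabs x <= 1 & P e x) ->
  exists c, forall e d, 0 < e -> 0 < d -> exists2 x, P e x & Rabs (x - c) < d.
Proof.
move=> mono inhab.
pose L y := forall e, 0 < e -> exists x, [/\ Rabs x <= 1, P e x & y <= x].
have L_bound : bound L.
  by exists 1 => y Ly; have [x [x1 _ yx]] := Ly 1 Rlt_0_1; move: x1; split_Rabs; lra.
have L_inhab : exists y, L y.
  exists (-1) => e e0; have [x x1 Px] := inhab e e0.
  by exists x; split => //; move: x1; split_Rabs; lra.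
have [c [c_ub c_lub]] := completeness L L_bound L_inhab.
exists c => e d e0 d0.
(* [c - d/2] is not an upper bound of [L] *)
have [y Ly yc] : exists2 y, L y & c - d / 2 < y.
  apply: NNPP => none; suff : c <= c - d / 2 by lra.
  by apply: c_lub => y Ly; apply: Rnot_lt_le => yc; apply: none; exists y.
(* [c + d/2] is not in [L]: some [P e1] stays in [(-oo, c + d/2)] *)
have [e1 e1_0 below] : exists2 e1, 0 < e1 &
    forall x, Rabs x <= 1 -> P e1 x -> x < c + d / 2.
  apply: NNPP => none; suff : L (c + d / 2) by move/c_ub; lra.
  move=> e1 e1_0; apply: NNPP => noPt; apply: none; exists e1 => // x x1 Px.
  by apply: Rnot_le_lt => cx; apply: noPt; exists x.
have em_0 : 0 < Rmin e e1 by apply: Rmin_pos.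
have [x [x1 Px yx]] := Ly _ em_0.
exists x; first exact: mono _ _ _ em_0 (Rmin_l e e1) Px.
have := below x x1 (mono _ _ _ em_0 (Rmin_r e e1) Px).
by move=> xc; apply: Rabs_def1; lra.
Qed.

Lemma cluster (K : finType) (W : Type) (Q : R -> W -> Prop) (pt : W -> K -> R) :
  (forall e e' w, 0 < e -> e <= e' -> Q e w -> Q e' w) ->
  (forall e, 0 < e -> exists w, Q e w) ->
  (forall e w k, Q e w -> Rabs (pt w k) <= 1) ->
  exists c : K -> R, forall e d, 0 < e -> 0 < d ->
    exists2 w, Q e w & forall k, Rabs (pt w k - c k) < d.
Proof.
move=> mono inhab cube.
suff [c cl] : exists c : K -> R, forall e d, 0 < e -> 0 < d ->
    exists2 w, Q e w & forall k, k \in enum K -> Rabs (pt w k - c k) < d.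
  exists c => e d e0 d0; have [w Qw near] := cl e d e0 d0.
  by exists w => // k; apply: near; rewrite mem_enum.
elim: (enum K) => [|k0 s [c cl]].
  by exists (fun _ => 0) => e d e0 _; have [w Qw] := inhab e e0; exists w.
(* adjoin coordinate [k0] by a one-dimensional cluster argument *)
pose P e x := exists2 w, Q e w /\ (forall k, k \in s -> Rabs (pt w k - c k) < e) & pt w k0 = x.
have [c0 cl0] : exists c0, forall e d, 0 < e -> 0 < d ->
    exists2 x, P e x & Rabs (x - c0) < d.
  apply: cluster1.
    move=> e e' x e0 ee' [w [Qw near] <-]; exists w => //.
    by split; [exact: mono _ _ _ e0 ee' Qw | move=> k ks; have := near k ks; lra].
  move=> e e0; have [w Qw near] := cl e e e0 e0.
  by exists (pt w k0); [exact: cube Qw | exists w].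
exists (fun k => if k == k0 then c0 else c k) => e d e0 d0.
have em_0 : 0 < Rmin e d by apply: Rmin_pos.
have [x [w [Qw near] wx] xc] := cl0 _ d em_0 d0.
exists w; first exact: mono _ _ _ em_0 (Rmin_l e d) Qw.
move=> k; rewrite in_cons; case: eqP => [-> _ | _ /= ks]; first by rewrite wx.
by have := near k ks; have := Rmin_r e d; lra.
Qed.

Definition supp (T : finType) (f : T -> R) : {set T} := [set i | f i != 0].

Lemma in_suppP (T : finType) (f : T -> R) i : reflect (f i <> 0) (i \in supp f).
Proof. by rewrite inE; apply: (iffP idP) => /eqP. Qed.

Lemma notin_supp (T : finType) (f : T -> R) i : i \notin supp f -> f i = 0.
Proof. by rewrite inE negbK => /eqP. Qed.

Definition minimal (T U : finType) (P : {set T} -> {set U} -> Prop) I J :=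
  P I J /\ forall (I' : {set T}) (J' : {set U}),
    I' \subset I -> J' \subset J -> P I' J' -> I' = I /\ J' = J.

Lemma card_subpair_lt (T U : finType) (I I' : {set T}) (J J' : {set U}) :
  I' \subset I -> J' \subset J -> ~ (I' = I /\ J' = J) -> (#|I'| + #|J'| < #|I| + #|J|)%N.
Proof.
move=> sI sJ ne; case: (eqVneq I' I) => [eI | neI].
  have neJ : J' != J by apply/eqP => eJ; apply: ne.
  by rewrite eI ltn_add2l proper_card // properEneq neJ.
by rewrite -addSn leq_add // ?subset_leq_card // proper_card // properEneq neI.
Qed.

Lemma minimal_below (T U : finType) (P : {set T} -> {set U} -> Prop) I J :
  P I J -> exists (I0 : {set T}) (J0 : {set U}), [/\ I0 \subset I, J0 \subset J & minimal P I0 J0].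
Proof.
have [k] : exists k, (#|I| + #|J| < k)%N by exists (#|I| + #|J|).+1.
elim: k I J => // k IH I J size PIJ.
case: (classic (minimal P I J)) => [min | notmin]; first by exists I, J.
have [I1 [J1 [sI sJ P1 ne]]] : exists (I1 : {set T}) (J1 : {set U}),
    [/\ I1 \subset I, J1 \subset J, P I1 J1 & ~ (I1 = I /\ J1 = J)].
  apply: NNPP => none; apply: notmin; split => // I1 J1 sI sJ P1.
  by apply: NNPP => ne; apply: none; exists I1, J1.
have size1 : (#|I1| + #|J1| < k)%N.
  by apply: leq_trans (card_subpair_lt sI sJ ne) _; rewrite -ltnS.
have [I0 [J0 [sI0 sJ0 min0]]] := IH I1 J1 size1 P1.
by exists I0, J0; split => //; apply: subset_trans; eassumption.
Qed.

Section Multipliers.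
Variables n mle meq : nat.
Notation jetT := (jet n mle meq).
Implicit Types (s t : jetT) (mu : 'I_mle.+1 -> R) (lam : 'I_meq -> R).

Definition balance s mu lam (k : 'I_n) : R :=
  \big[Rplus/0]_(i < mle.+1) (mu i * aext s i k) + \big[Rplus/0]_(j < meq) (lam j * jb s j k).

Definition nonzero mu lam := (exists i, mu i <> 0) \/ (exists j, lam j <> 0).

Lemma admits_of_mult s mu lam :
  inC s mu lam -> nonzero mu lam -> admits s (supp mu) (supp lam).
Proof.
move=> [alpha [mu_ge0 [inactive bal]]] nz; split.
  by move=> i /in_suppP mu_i; apply: NNPP => /inactive.
split.
  by case: nz => [[i mu_i] | [j lam_j]]; [left | right]; apply/set0Pn;
    [exists i | exists j]; apply/in_suppP.
exists mu, lam; split; first by [].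
split => [i | j]; split; try exact: notin_supp.
- by move/in_suppP; have := mu_ge0 i; lra.
- by move/in_suppP.
Qed.

Lemma mult_of_admits s I J : admits s I J ->
  exists mu lam, [/\ inC s mu lam, nonzero mu lam, supp mu = I & supp lam = J].
Proof.
move=> [_ [ne [mu [lam [C [onI onJ]]]]]].
have eI : supp mu = I.
  apply/setP => i; rewrite inE; have [pos zero] := onI i.
  by case: (boolP (i \in I)) => iI; [apply/eqP; have := pos iI; lra | rewrite zero ?eqxx].
have eJ : supp lam = J.
  apply/setP => j; rewrite inE; have [nz zero] := onJ j.
  by case: (boolP (j \in J)) => jJ; [apply/eqP/nz | rewrite zero ?eqxx].
exists mu, lam; split => //.
by case: ne => /set0Pn [x]; [rewrite -eI | rewrite -eJ] => /in_suppP; [left | right]; exists x.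
Qed.

Definition nz_mult (b : bool) s mu lam :=
  [/\ inC s mu lam, nonzero mu lam & b -> mu ord_max = 0].

(* [chiSP \/ chiMF] and [chiMF] in terms of multipliers: pass to the support
   of a multiplier, then to a minimal admissible pair inside it. *)
Lemma union_iff s : chiSP s \/ chiMF s <-> exists mu lam, nz_mult false s mu lam.
Proof.
split.
  by case=> [[I [J [[adm _] _]]] | [I [J [[adm _] _]]]];
    have [mu [lam [C nz _ _]]] := mult_of_admits adm; exists mu, lam.
move=> [mu [lam [C nz _]]].
have [I0 [J0 [_ _ min0]]] := minimal_below (admits_of_mult C nz).
by case: (boolP (ord_max \in I0)) => max0; [left | right]; exists I0, J0.
Qed.

Lemma MF_iff s : chiMF s <-> exists mu lam, nz_mult true s mu lam.
Proof.
split.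
  move=> [I [J [[adm _] notmax]]]; have [mu [lam [C nz eI _]]] := mult_of_admits adm.
  by exists mu, lam; split => // _; apply: notin_supp; rewrite eI.
move=> [mu [lam [C nz /(_ isT) mu_max]]].
have [I0 [J0 [sI _ min0]]] := minimal_below (admits_of_mult C nz).
by exists I0, J0; split => //; apply/negP => /(subsetP sI) /in_suppP [].
Qed.

Lemma balance_comb s mu lam mu2 lam2 r k :
  balance s (fun i => mu i + r * mu2 i) (fun j => lam j + r * lam2 j) k =
  balance s mu lam k + r * balance s mu2 lam2 k.
Proof.
rewrite /balance.
under eq_bigr do rewrite Rmult_plus_distr_r Rmult_assoc.
under [X in _ + X = _]eq_bigr do rewrite Rmult_plus_distr_r Rmult_assoc.
by rewrite !big_split -!big_distrr /=; ring.
Qed.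

Lemma balance_scal s mu lam r k :
  balance s (fun i => r * mu i) (fun j => r * lam j) k = r * balance s mu lam k.
Proof.
rewrite /balance.
under eq_bigr do rewrite Rmult_assoc.
under [X in _ + X = _]eq_bigr do rewrite Rmult_assoc.
by rewrite -!big_distrr /=; ring.
Qed.

Lemma inC_comb s mu lam mu2 lam2 r : inC s mu lam -> inC s mu2 lam2 ->
  (forall i, 0 <= mu i + r * mu2 i) ->
  inC s (fun i => mu i + r * mu2 i) (fun j => lam j + r * lam2 j).
Proof.
move=> [alpha [_ [inact bal]]] [_ [_ [inact2 bal2]]] ge0.
split => //; split => //; split; first by move=> i /[dup] /inact -> /inact2 ->; ring.
by move=> k; have := balance_comb s mu lam mu2 lam2 r k; rewrite /balance bal bal2 => ->; ring.
Qed.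

Lemma inC_scal s mu lam r : inC s mu lam -> 0 < r ->
  inC s (fun i => r * mu i) (fun j => r * lam j).
Proof.
move=> [alpha [mu_ge0 [inact bal]]] r0; split => //; split.
  by move=> i; apply: Rmult_le_pos; [lra | exact: mu_ge0].
split; first by move=> i /inact ->; ring.
by move=> k; have := balance_scal s mu lam r k; rewrite /balance bal => ->; ring.
Qed.

Lemma supp_comb (T : finType) (f g : T -> R) r :
  supp g \subset supp f -> supp (fun i => f i + r * g i) \subset supp f.
Proof.
move=> sgf; apply/subsetP => i /in_suppP fg_i; apply/in_suppP => f_i; apply: fg_i.
have gi : i \notin supp g by apply/negP => /(subsetP sgf) /in_suppP [].
by rewrite f_i (notin_supp gi); ring.
Qed.

Lemma reduce s mu lam mu2 lam2 :
  inC s mu lam -> inC s mu2 lam2 -> nonzero mu2 lam2 -> mu2 ord_max = 0 ->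
  supp mu2 \subset supp mu -> supp lam2 \subset supp lam ->
  exists mu' lam', [/\ inC s mu' lam', mu' ord_max = mu ord_max,
    supp mu' \subset supp mu, supp lam' \subset supp lam &
    ~ (supp mu' = supp mu /\ supp lam' = supp lam)].
Proof.
move=> C C2 nz2 max2 sI sJ.
have [_ [mu_ge0 _]] := C; have [_ [mu2_ge0 _]] := C2.
suff [r ge0 kill] : exists2 r, (forall i, 0 <= mu i + r * mu2 i) &
    (exists2 i, mu i <> 0 & mu i + r * mu2 i = 0) \/
    (exists2 j, lam j <> 0 & lam j + r * lam2 j = 0).
  exists (fun i => mu i + r * mu2 i), (fun j => lam j + r * lam2 j); split.
  - exact: inC_comb.
  - by rewrite max2; ring.
  - exact: supp_comb.
  - exact: supp_comb.
  - case=> eI eJ; case: kill => [[i mu_i killed] | [j lam_j killed]].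
      by move/in_suppP: mu_i; rewrite -eI => /in_suppP [].
    by move/in_suppP: lam_j; rewrite -eJ => /in_suppP [].
case: (classic (exists i, 0 < mu2 i)) => [[i0 pos0] | nopos].
(* the ratio test: move along [-mu2] until a first coordinate of [mu] vanishes *)
  case: (@arg_minP _ _ _ i0 (fun i => R0 < mu2 i)%O (fun i => mu i / mu2 i)) =>
    [|i1 /RltP pos1 min1]; first exact/RltP.
  exists (- (mu i1 / mu2 i1)).
    move=> i; case: (Rle_lt_or_eq_dec _ _ (mu2_ge0 i)) => [pos | <-];
      last by have := mu_ge0 i; lra.
    have /RleP ratio := min1 i (introT RltP pos).
    have : mu i1 / mu2 i1 * mu2 i <= mu i / mu2 i * mu2 i by apply: Rmult_le_compat_r; lra.
    have -> : mu i / mu2 i * mu2 i = mu i by field; lra.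
    lra.
  left; exists i1; last by field; lra.
  by apply/in_suppP/(subsetP sI)/in_suppP; lra.
(* otherwise [mu2 = 0], and some [lam_j] can be cancelled *)
have mu2_0 i : mu2 i = 0.
  by case: (Rle_lt_or_eq_dec _ _ (mu2_ge0 i)) => // pos; case: nopos; exists i.
have [j lam2_j] : exists j, lam2 j <> 0 by case: nz2 => [[i]|//]; rewrite mu2_0.
exists (- (lam j / lam2 j)); first by move=> i; rewrite mu2_0; have := mu_ge0 i; lra.
right; exists j; last by field.
exact/in_suppP/(subsetP sJ)/in_suppP.
Qed.

(* A multiplier with a positive coefficient on [a_*] witnesses [chiSP]: a
   minimal pair among admissible pairs containing [m_<=^*] is minimal among
   all admissible pairs, since a smaller admissible pair avoiding [m_<=^*]
   could be removed from it by [reduce]. *)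
Lemma SP_of_mult s mu lam : inC s mu lam -> 0 < mu ord_max -> chiSP s.
Proof.
move=> C pos.
pose P I J := admits s I J /\ ord_max \in I.
have P_supp mu' lam' : inC s mu' lam' -> 0 < mu' ord_max -> P (supp mu') (supp lam').
  move=> C' pos'; have nz' : nonzero mu' lam' by left; exists ord_max; lra.
  by split; [exact: admits_of_mult | apply/in_suppP; lra].
have [I0 [J0 [_ _ [[adm0 max0] min0]]]] := minimal_below (P_supp _ _ C pos).
exists I0, J0; split => //; split => // I1 J1 sI sJ adm1.
case: (boolP (ord_max \in I1)) => max1; first exact: min0.
have [mu0 [lam0 [C0 _ eI0 eJ0]]] := mult_of_admits adm0.
have [mu1 [lam1 [C1 nz1 eI1 eJ1]]] := mult_of_admits adm1.
subst I0 J0 I1 J1.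
have [mu' [lam' [C' max' sI' sJ' smaller]]] :=
  reduce C0 C1 nz1 (notin_supp max1) sI sJ.
have pos' : 0 < mu' ord_max.
  by rewrite max'; move/in_suppP: max0; have [_ [ge0 _]] := C0; have := ge0 ord_max; lra.
by case: smaller; apply: min0 => //; apply: P_supp.
Qed.

Definition coords mu lam (k : 'I_mle.+1 + 'I_meq) : R :=
  match k with inl i => mu i | inr j => lam j end.

Definition unit_mult mu lam :=
  (forall k, Rabs (coords mu lam k) <= 1) /\ exists k, Rabs (coords mu lam k) = 1.

Lemma normalize b t mu lam : nz_mult b t mu lam ->
  exists mu' lam', nz_mult b t mu' lam' /\ unit_mult mu' lam'.
Proof.
case=> C nz vanish; pose F k := Rabs (coords mu lam k).
case: (@arg_maxP _ _ _ (inl ord_max) xpredT F isT) => k0 _ k0_max.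
set M := F k0 in k0_max.
have M0 : 0 < M.
  by case: nz => [[i] | [j]] /Rabs_pos_lt; [have := k0_max (inl i) isT | have := k0_max (inr j) isT];
    move/RleP; rewrite /F /=; lra.
have iM0 := Rinv_0_lt_compat _ M0.
have scaled k : Rabs (coords (fun i => / M * mu i) (fun j => / M * lam j) k) = / M * F k.
  by case: k => [i|j]; rewrite /F /= Rabs_mult Rabs_pos_eq //; lra.
exists (fun i => / M * mu i), (fun j => / M * lam j); split.
  split; [exact: inC_scal | | by move/vanish ->; ring].
  by case: nz => [[i mu_i] | [j lam_j]]; [left; exists i | right; exists j];
    apply: Rmult_integral_contrapositive_currified => //; lra.
split=> [k | ]; last by exists k0; rewrite scaled Rinv_l //; lra.
rewrite scaled; have /RleP Fk := k0_max k isT.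
by rewrite -(Rinv_l M); [apply: Rmult_le_compat_l; lra | lra].
Qed.

Lemma jet_close_mono s t e e' : e <= e' -> jet_close s t e -> jet_close s t e'.
Proof.
move=> ee' [ca [calpha [cb [cbeta castar]]]].
split; first by move=> i k; have := ca i k; lra.
split; first by move=> i; have := calpha i; lra.
split; first by move=> j k; have := cb j k; lra.
split; first by move=> j; have := cbeta j; lra.
by move=> k; have := castar k; lra.
Qed.

Lemma aext_close s t e : jet_close s t e -> forall i k, Rabs (aext s i k - aext t i k) < e.
Proof.
by move=> [ca [_ [_ [_ castar]]]] i k; rewrite /aext; case: (unlift ord_max i).
Qed.

(* Limits of normalized multipliers of nearby jets are multipliers: all the
   conditions defining [C(s)] survive the limit. *)
Section Limit.
Variables (b : bool) (s : jetT) (mu0 : 'I_mle.+1 -> R) (lam0 : 'I_meq -> R).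
Hypothesis approx : forall e d, 0 < e -> 0 < d -> exists t mu lam,
  [/\ jet_close s t e, nz_mult b t mu lam, unit_mult mu lam &
      forall k, Rabs (coords mu lam k - coords mu0 lam0 k) < d].

Lemma lim_alpha i : jalpha s i <= 0.
Proof.
apply: Rnot_lt_le => pos.
have [t [mu [lam [[_ [calpha _]] [[alpha _] _ _] _ _]]]] := approx pos Rlt_0_1.
by have := Rabs_def2 _ _ (calpha i); have := alpha i; lra.
Qed.

Lemma lim_mu_ge0 i : 0 <= mu0 i.
Proof.
apply: Rnot_lt_le => neg; have neg' : 0 < - mu0 i by lra.
have [t [mu [lam [_ [[_ [mu_ge0 _]] _ _] _ near]]]] := approx Rlt_0_1 neg'.
by have := Rabs_def2 _ _ (near (inl i)); have := mu_ge0 i; rewrite /=; lra.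
Qed.

(* A strictly inactive constraint stays inactive nearby, so its coefficient
   is zero along the approximation. *)
Lemma lim_inactive i : ~ in_I0star s i -> mu0 i = 0.
Proof.
rewrite /in_I0star; case E: (unlift ord_max i) => [j|] inact; last by case: inact.
have neg : 0 < - jalpha s j.
  by case: (Rle_lt_or_eq_dec _ _ (lim_alpha j)) => //; lra.
apply: small_eq0 => d d0.
have [t [mu [lam [[_ [calpha _]] [[_ [_ [inact_t _]]] _ _] _ near]]]] := approx neg d0.
have mu_i : mu i = 0.
  apply: inact_t; rewrite /in_I0star E.
  by have := Rabs_def2 _ _ (calpha j); lra.
by have := near (inl i); rewrite /= mu_i Rminus_0_l Rabs_Ropp; lra.
Qed.

(* The balance equation passes to the limit by continuity of the pairing. *)
Lemma lim_balance k : balance s mu0 lam0 k = 0.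
Proof.
apply: small_eq0 => g g0; have g2 : 0 < g / 2 by lra.
have [e1 e1_0 close1] := bilinear_close (fun i => aext s i k) g2.
have [e2 e2_0 close2] := bilinear_close (fun j => jb s j k) g2.
have e0 : 0 < Rmin e1 e2 by apply: Rmin_pos.
have [t [mu [lam [cl [[_ [_ [_ bal]]] _ _] [unit _] near]]]] := approx e0 e0.
have dmu i : Rabs (mu0 i - mu i) <= e1.
  by rewrite Rabs_minus_sym; have := near (inl i); have := Rmin_l e1 e2; rewrite /=; lra.
have dlam j : Rabs (lam0 j - lam j) <= e2.
  by rewrite Rabs_minus_sym; have := near (inr j); have := Rmin_r e1 e2; rewrite /=; lra.
have da i : Rabs (aext s i k - aext t i k) <= e1.
  by have := aext_close cl i k; have := Rmin_l e1 e2; lra.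
have db j : Rabs (jb s j k - jb t j k) <= e2.
  by have [_ [_ [cb _]]] := cl; have := cb j k; have := Rmin_r e1 e2; lra.
have h1 : Rabs (\big[Rplus/0]_(i < mle.+1) (mu0 i * aext s i k) -
                \big[Rplus/0]_(i < mle.+1) (mu i * aext t i k)) <= g / 2.
  exact: close1 mu0 mu _ dmu (fun i => unit (inl i)) da.
have h2 : Rabs (\big[Rplus/0]_(j < meq) (lam0 j * jb s j k) -
                \big[Rplus/0]_(j < meq) (lam j * jb t j k)) <= g / 2.
  exact: close2 lam0 lam _ dlam (fun j => unit (inr j)) db.
by have := bal k; rewrite /balance; split_Rabs; lra.
Qed.

(* Sup-norm one keeps the limit away from zero. *)
Lemma lim_nonzero : nonzero mu0 lam0.
Proof.
have half : 0 < 1 / 2 by lra.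
have [t [mu [lam [_ _ [_ [k unit_k]] near]]]] := approx Rlt_0_1 half.
have nz : coords mu0 lam0 k <> 0.
  by move=> z; have := near k; rewrite z Rminus_0_r unit_k; lra.
by case: k nz {unit_k near} => [i|j] nz; [left; exists i | right; exists j].
Qed.

Lemma lim_vanish : b -> mu0 ord_max = 0.
Proof.
move=> bT; apply: small_eq0 => d d0.
have [t [mu [lam [_ [_ _ /(_ bT) mu_max] _ near]]]] := approx Rlt_0_1 d0.
by have := near (inl ord_max); rewrite /= mu_max Rminus_0_l Rabs_Ropp; lra.
Qed.

Lemma lim_nz_mult : nz_mult b s mu0 lam0.
Proof.
split; [| exact: lim_nonzero | exact: lim_vanish].
split; first exact: lim_alpha.
split; first exact: lim_mu_ge0.
split; first exact: lim_inactive.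
exact: lim_balance.
Qed.
End Limit.

(* Closedness of the set of jets admitting a nonzero multiplier (vanishing on
   [a_*] when [b] holds): normalize the multipliers of approximating jets and
   extract a cluster point by Bolzano-Weierstrass. *)
Lemma mult_closed b : jclosed (fun s => exists mu lam, nz_mult b s mu lam).
Proof.
move=> s cl.
pose Q e (w : jetT * (('I_mle.+1 -> R) * ('I_meq -> R))) :=
  [/\ jet_close s w.1 e, nz_mult b w.1 w.2.1 w.2.2 & unit_mult w.2.1 w.2.2].
have [c near] : exists c : 'I_mle.+1 + 'I_meq -> R, forall e d, 0 < e -> 0 < d ->
    exists2 w, Q e w & forall k, Rabs (coords w.2.1 w.2.2 k - c k) < d.
  apply: cluster.
  - by move=> e e' w e0 ee' [cl' nzm unit]; split => //; exact: jet_close_mono cl'.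
  - move=> e e0; have [t [[mu [lam nzm]] cl']] := cl e e0.
    by have [mu' [lam' [nzm' unit]]] := normalize nzm; exists (t, (mu', lam')).
  - by move=> e w k [_ _ [unit _]].
exists (fun i => c (inl i)), (fun j => c (inr j)); apply: lim_nz_mult => e d e0 d0.
have [[t [mu lam]] [cl' nzm unit] close] := near e d e0 d0.
by exists t, mu, lam; split => // -[i|j]; apply: close.
Qed.

Lemma jclosure_mono (S T : jetT -> Prop) :
  (forall s, S s -> T s) -> forall s, jclosure S s -> jclosure T s.
Proof. by move=> ST s cl e e0; have [t [St close]] := cl e e0; exists t; split => //; apply: ST. Qed.

Lemma jclosure_self (S : jetT -> Prop) s : S s -> jclosure S s.
Proof.
move=> Ss e e0; exists s; split => //.
by split; [|split; [|split; [|split]]] => *; rewrite Rminus_diag Rabs_R0.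
Qed.

Lemma MF_closed : jclosed (@chiMF n mle meq).
Proof.
move=> s cl; apply/MF_iff/(@mult_closed true).
by apply: jclosure_mono cl => t /MF_iff.
Qed.

Lemma union_closed : jclosed (fun s : jetT => chiSP s \/ chiMF s).
Proof.
move=> s cl; apply/union_iff/(@mult_closed false).
by apply: jclosure_mono cl => t /union_iff.
Qed.

Definition shift s lam (c : R) : jetT :=
  Jet (fun i k => ja s i k - c * jastar s k) (jalpha s)
      (fun j k => jb s j k - c * lam j * jastar s k) (jbeta s) (jastar s).

Lemma mass_pos mu lam : (forall i, 0 <= mu i) -> nonzero mu lam ->
  0 < \big[Rplus/0]_(i < mle.+1) mu i + \big[Rplus/0]_(j < meq) (lam j * lam j).
Proof.
move=> mu_ge0 nz.
have sq_ge0 j : 0 <= lam j * lam j by apply: Rle_0_sqr.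
have : 0 <= \big[Rplus/0]_(i < mle.+1) mu i by apply: sumR_ge0.
have : 0 <= \big[Rplus/0]_(j < meq) (lam j * lam j) by apply: sumR_ge0.
case: nz => [[i mu_i] | [j lam_j]].
  have : mu i <= \big[Rplus/0]_(i < mle.+1) mu i by apply: sumR_term.
  by case: (Rle_lt_or_eq_dec _ _ (mu_ge0 i)) => // pos; lra.
have : lam j * lam j <= \big[Rplus/0]_(j < meq) (lam j * lam j).
  by apply: (sumR_term (F := fun j => lam j * lam j)).
by have := Rsqr_pos_lt _ lam_j; rewrite /Rsqr; lra.
Qed.

(* After shifting, the mass of [(mu, lam)] can be put on [a_*]: the shifted
   jet admits a multiplier with positive [a_*] coefficient. *)
Lemma shift_SP s mu lam c : inC s mu lam -> nonzero mu lam -> mu ord_max = 0 ->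
  0 < c -> chiSP (shift s lam c).
Proof.
move=> [alpha [mu_ge0 [inact bal]]] nz mu_max c0.
have S0 := mass_pos mu_ge0 nz; set S := _ + _ in S0.
apply: (@SP_of_mult _ (fun i => if i == ord_max then c * S else mu i) lam); last first.
  by rewrite eqxx; apply: Rmult_lt_0_compat.
split; first exact: alpha.
split; first by move=> i; case: eqP => _; [apply: Rlt_le; apply: Rmult_lt_0_compat | ].
split.
  move=> i; case: eqP => [-> | _ /inact //]; by rewrite /in_I0star unlift_none.
(* termwise: the shift subtracts [c a_*] times [sum mu + sum lam^2], which the
   new coefficient [c S] on [a_*] restores *)
move=> k.
rewrite (eq_bigr (fun i => mu i * aext s i k + (- (c * jastar s k)) * mu i +
           (if i == ord_max then c * S * jastar s k else 0))); last first.
  move=> i _; rewrite /aext; case: unliftP => [j -> | ->] /=.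
    by rewrite eq_sym (negbTE (neq_lift _ _)); ring.
  by rewrite eqxx mu_max; ring.
rewrite [X in _ + X](eq_bigr (fun j => lam j * jb s j k + (- (c * jastar s k)) * (lam j * lam j)));
  last by move=> j _ /=; ring.
rewrite !big_split -!big_distrr -big_mkcond big_pred1_eq /= /S.
(* naming the sums identifies the convertible copies coming from [inC] *)
have := bal k; rewrite /balance.
set A1 := \big[Rplus/0]_(i < mle.+1) (mu i * aext s i k).
set A2 := \big[Rplus/0]_(j < meq) (lam j * jb s j k).
set M1 := \big[Rplus/0]_(i < mle.+1) mu i.
set M2 := \big[Rplus/0]_(j < meq) (lam j * lam j).
by move=> bal_k; transitivity (A1 + A2); [ring | exact: bal_k].
Qed.

Lemma shift_close s lam eps : 0 < eps -> exists2 c, 0 < c & jet_close s (shift s lam c) eps.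
Proof.
move=> eps0; have [A A0 HA] := fin_bound (jastar s); have [L L0 HL] := fin_bound lam.
pose c := eps / (2 * ((L + 1) * (A + 1))).
have c0 : 0 < c by apply: Rdiv_lt_0_compat; nra.
have cLA : c * ((L + 1) * (A + 1)) = eps / 2 by rewrite /c; field; nra.
clearbody c.
have small x k : Rabs x <= L + 1 -> Rabs (c * x * jastar s k) < eps.
  move=> x1; rewrite !Rabs_mult (Rabs_pos_eq c); last lra.
  have : Rabs x * Rabs (jastar s k) <= (L + 1) * (A + 1).
    by apply: Rmult_le_compat; try apply: Rabs_pos; [| have := HA k; lra].
  by nra.
exists c => //; split; [| split; [| split; [| split]]] => /= [i k | i | j k | j | k];
  rewrite ?Rminus_diag ?Rabs_R0 //.
- have -> : ja s i k - (ja s i k - c * jastar s k) = c * 1 * jastar s k by ring.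
  by apply: small; rewrite Rabs_R1; lra.
- have -> : jb s j k - (jb s j k - c * lam j * jastar s k) = c * lam j * jastar s k by ring.
  by apply: small; have := HL j; lra.
Qed.

Lemma MF_in_closure s : chiMF s -> jclosure (@chiSP n mle meq) s.
Proof.
move=> /MF_iff [mu [lam [C nz vanish]]] eps eps0.
have [c c0 close] := shift_close s lam eps0.
by exists (shift s lam c); split => //; exact: shift_SP C nz (vanish isT) c0.
Qed.

End Multipliers.

Theorem mainTheorem7 (n mle meq : nat) :
  jclosed (@chiMF n mle meq) /\
  jclosed (fun sigma : jet n mle meq => chiSP sigma \/ chiMF sigma) /\
  (forall sigma, @chiMF n mle meq sigma -> jclosure (@chiSP n mle meq) sigma) /\
  (forall sigma, jclosure (@chiSP n mle meq) sigma <-> chiSP sigma \/ chiMF sigma).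
Proof.
split; first exact: MF_closed.
split; first exact: union_closed.
split; first exact: MF_in_closure.
move=> s; split.
- by move=> cl; apply: union_closed; apply: jclosure_mono cl => t; left.
- by case=> [/jclosure_self | /MF_in_closure].
Qed.
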